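(* $\mathbb{R}_{\mathcal{E}^2}\subsetneq\mathbb{R}_{\mathcal{E}^3}$; that is, every $\mathcal{E}^2$-computable real is $\mathcal{E}^3$-computable, and there exists a real number $\alpha$ that is $\mathcal{E}^3$-computable but not $\mathcal{E}^2$-computable.
   Context: $\mathbb{N}=\{0,1,2,\dots\}$. Initial functions: $Z(x)=0$, $S(x)=x+1$, projections $P^n_i(x_1,\dots,x_n)=x_i$. Define $f_0(x,y)=x+1$, $f_1(x,y)=x+y$, $f_2(x,y)=xy$, and for $n\ge2$: $f_{n+1}(x,0)=1$, $f_{n+1}(x,y+1)=f_n(x,f_{n+1}(x,y))$. A function $f$ is obtained by primitive recursion from $g:\mathbb{N}^{m-1}\to\mathbb{N}$, $h:\mathbb{N}^{m+1}\to\mathbb{N}$ if $f(0,\bar x)=g(\bar x)$ and $f(x+1,\bar x)=h(x,f(x,\bar x),\bar x)$; it is obtained by bounded primitive recursion from $g,h,j$ if moreover $f(x,\bar x)\le j(x,\bar x)$ for all arguments. The Grzegorczyk class $\mathcal{E}^n$ is the smallest set of functions containing the initial functions and $f_n$ and closed under composition and bounded primitive recursion (with $g,h,j$ in the class). For a class $\mathcal{F}$ of functions $\mathbb{N}^k\to\mathbb{N}$, an $\mathcal{F}$-sequence is $A(x)=\frac{f(x)-g(x)}{h(x)+1}$ with $f,g,h:\mathbb{N}\to\mathbb{N}$ in $\mathcal{F}$, and $\alpha\in\mathbb{R}$ is $\mathcal{F}$-computable if some $\mathcal{F}$-sequence $A$ satisfies $|A(x)-\alpha|\le\frac1{x+1}$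 for all $x$; $\mathbb{R}_{\mathcal{F}}$ denotes the set of $\mathcal{F}$-computable reals. *)

From mathcomp Require Import all_boot.
From Stdlib Require Import Reals.

Set Implicit Arguments.
Unset Strict Implicit.

Definition vec (k : nat) := 'I_k -> nat.
Definition fn (k : nat) := vec k -> nat.

Definition vcons (k : nat) (a : nat) (v : vec k) : vec k.+1 :=
  fun i => match unlift ord0 i with None => a | Some j => v j end.
Definition vtail (k : nat) (v : vec k.+1) : vec k := fun i => v (lift ord0 i).

Fixpoint fgrz (n : nat) (x y : nat) {struct n} : nat :=
  match n with
  | 0 => x.+1
  | 1 => x + y
  | 2 => x * y
  | n'.+1 =>
      (fix F (y : nat) : nat :=
         match y with 0 => 1 | y'.+1 => fgrz n' x (F y') end) y
  end.

Fixpoint primrec (m : nat) (g : fn m) (h : fn m.+2) (y : nat) (xs : vec m) : nat :=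
  match y with
  | 0 => g xs
  | y'.+1 => h (vcons y' (vcons (primrec g h y' xs) xs))
  end.

Inductive Grz (n : nat) : forall k : nat, fn k -> Prop :=
  | GrzZero : forall k, Grz n (fun _ : vec k => 0)
  | GrzSucc : Grz n (fun x : vec 1 => (x ord0).+1)
  | GrzProj : forall k (i : 'I_k), Grz n (fun x : vec k => x i)
  | GrzF : Grz n (fun x : vec 2 => fgrz n (x ord0) (x ord_max))
  | GrzComp : forall m k (f : fn m) (gs : 'I_m -> fn k),
      Grz n f -> (forall i, Grz n (gs i)) ->
      Grz n (fun x : vec k => f (fun i => gs i x))
  | GrzBRec : forall m (g : fn m) (h : fn m.+2) (j : fn m.+1),
      Grz n g -> Grz n h -> Grz n j ->
      (forall x : vec m.+1, primrec g h (x ord0) (vtail x) <= j x) ->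
      Grz n (fun x : vec m.+1 => primrec g h (x ord0) (vtail x))
  | GrzExt : forall k (f g : fn k), Grz n f -> (forall x, f x = g x) -> Grz n g.

Definition Grz1 (n : nat) (f : nat -> nat) : Prop :=
  Grz n (fun x : vec 1 => f (x ord0)).

Definition seqA (f g h : nat -> nat) (x : nat) : R :=
  ((INR (f x) - INR (g x)) / (INR (h x) + 1))%R.

Definition Ecomputable (n : nat) (alpha : R) : Prop :=
  exists f g h : nat -> nat, Grz1 n f /\ Grz1 n g /\ Grz1 n h /\
    forall x : nat, (Rabs (seqA f g h x - alpha) <= 1 / (INR x + 1))%R.

Example fgrz_check : fgrz 3 2 3 = 8 /\ fgrz 4 2 3 = 16 /\ fgrz 2 3 4 = 12.
Proof. repeat split; reflexivity. Qed.

From Stdlib Require Import Reals FunctionalExtensionality Lia Lra Psatz.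
From mathcomp Require Import all_boot zify.

Set Implicit Arguments.
Unset Strict Implicit.

(** Every E^2 function is polynomially bounded, and E^2 can be evaluated by a
    stack machine whose one-step transition function is itself in E^2, the
    program for an E^2 function f halting on x within (sum x + 2)^d steps.
    Iterating a polynomially bounded function t times is bounded by
    (s + 2)^(e^t), so t |-> step^t is in E^3, and a single E^3 function
    [run c X T] simulates every unary E^2 function.
    The real alpha is built in base 4 with digits 0 or 2; digit k diagonalizes
    against the k-th triple of programs (f, g, h) with time exponent d: at
    X = 4^(k+2) - 1 an approximation (f X - g X)/(h X + 1) must be within
    1/4^(k+2) of alpha, and digit k is chosen to keep alpha farther away.
    The truncations alpha_num n / 4^n are themselves E^3 approximations. *)

(** * Closure properties of Grzegorczyk classes *)

Lemma vcons0 k a (v : vec k) : vcons a v ord0 = a.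
Proof. by rewrite /vcons unlift_none. Qed.

Lemma vconsS k a (v : vec k) i : vcons a v (lift ord0 i) = v i.
Proof. by rewrite /vcons liftK. Qed.

Lemma vtail_vcons k a (v : vec k) : vtail (vcons a v) = v.
Proof. by apply: functional_extensionality => i; apply: vconsS. Qed.

Lemma sum_vcons k a (v : vec k) : \sum_(i < k.+1) vcons a v i = a + \sum_(i < k) v i.
Proof.
by rewrite big_ord_recl vcons0; congr (_ + _); apply: eq_bigr => i _; rewrite vconsS.
Qed.

Lemma primrecE m (g : fn m) (h : fn m.+2) y xs :
  primrec g h y xs = iteri y (fun i r => h (vcons i (vcons r xs))) (g xs).
Proof. by elim: y => //= y ->. Qed.

Lemma iteri_succn y a : iteri y (fun _ => succn) a = y + a.
Proof. by elim: y => //= y ->. Qed.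

Lemma iteri_addn y a : iteri y (fun _ r => r + a) 0 = y * a.
Proof. by elim: y => //= y ->; rewrite mulSn addnC. Qed.

Lemma iteri_predn y a : iteri y (fun _ => predn) a = a - y.
Proof. by elim: y => /= [|y ->]; rewrite ?subn0 ?subnS. Qed.

Definition Grz_op2 n (F : nat -> nat -> nat) :=
  Grz n (fun v : vec 2 => F (v ord0) (v ord_max)).

Section Closure.

Variable n : nat.

Lemma Grz_const k c : Grz n (fun _ : vec k => c).
Proof.
elim: c => [|c IHc]; first exact: GrzZero.
exact: (GrzComp (gs := fun _ : 'I_1 => _) (GrzSucc n) (fun _ => IHc)).
Qed.

Lemma Grz_succ k (a : fn k) : Grz n a -> Grz n (fun x => (a x).+1).
Proof. by move=> Ha; apply: (GrzComp (gs := fun _ : 'I_1 => a) (GrzSucc n)). Qed.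

Lemma Grz_comp1 k F (a : fn k) : Grz1 n F -> Grz n a -> Grz n (fun x => F (a x)).
Proof. by move=> HF Ha; apply: (GrzComp (gs := fun _ : 'I_1 => a) HF). Qed.

Lemma Grz_comp2 k F (a b : fn k) :
  Grz_op2 n F -> Grz n a -> Grz n b -> Grz n (fun x => F (a x) (b x)).
Proof.
move=> HF Ha Hb.
by apply: (GrzComp (gs := fun i : 'I_2 => if i == ord0 then a else b) HF) => -[[|]].
Qed.

Lemma Grz_iteri k (t g : fn k) (h : nat -> nat -> vec k -> nat) (j : nat -> vec k -> nat) :
  Grz n t -> Grz n g ->
  Grz n (fun w : vec k.+2 => h (w ord0) (vtail w ord0) (vtail (vtail w))) ->
  Grz n (fun w : vec k.+1 => j (w ord0) (vtail w)) ->
  (forall y x, iteri y (fun i r => h i r x) (g x) <= j y x) ->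
  Grz n (fun x => iteri (t x) (fun i r => h i r x) (g x)).
Proof.
move=> Ht Hg Hh Hj Hb.
pose H (w : vec k.+2) := h (w ord0) (vtail w ord0) (vtail (vtail w)).
have HE y x : primrec g H y x = iteri y (fun i r => h i r x) (g x).
  by rewrite primrecE; apply: eq_iteri => i r; rewrite /H vcons0 !vtail_vcons vcons0.
have Hrec : Grz n (fun w : vec k.+1 => primrec g H (w ord0) (vtail w)).
  by apply: (GrzBRec Hg Hh Hj) => w; rewrite HE.
apply: GrzExt (GrzComp (gs := fun i x => vcons (t x) x i) Hrec _) _ => [i|x].
  by rewrite /vcons; case: unliftP => [i' _|_]; [apply: GrzProj | apply: Ht].
by rewrite -/(vcons (t x) x) vcons0 vtail_vcons HE.
Qed.

Lemma Grz_op2_add_of_bound j :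
  Grz_op2 n j -> (forall x y, x + y <= j x y) -> Grz_op2 n addn.
Proof.
move=> Hj Hb.
apply: GrzExt (Grz_iteri (t := fun v => v ord0) (g := fun v => v ord_max)
  (h := fun _ r _ => r.+1) (j := fun y v => j y (v ord_max)) _ _ _ _ _) _.
- exact: GrzProj.
- exact: GrzProj.
- by apply: Grz_succ; apply: GrzProj.
- by apply: Grz_comp2 Hj _ _; apply: GrzProj.
- by move=> y v; rewrite iteri_succn.
- by move=> v; rewrite iteri_succn.
Qed.

Lemma Grz_op2_mul_of_bound j :
  Grz_op2 n addn -> Grz_op2 n j -> (forall x y, x * y <= j x y) -> Grz_op2 n muln.
Proof.
move=> Hadd Hj Hb.
apply: GrzExt (Grz_iteri (t := fun v => v ord0) (g := fun _ => 0)
  (h := fun _ r v => r + v ord_max) (j := fun y v => j y (v ord_max)) _ _ _ _ _) _.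
- exact: GrzProj.
- exact: Grz_const.
- by apply: Grz_comp2 Hadd _ _; apply: GrzProj.
- by apply: Grz_comp2 Hj _ _; apply: GrzProj.
- by move=> y v; rewrite iteri_addn.
- by move=> v; rewrite iteri_addn.
Qed.

Lemma Grz1_predn : Grz1 n predn.
Proof.
apply: GrzExt (Grz_iteri (t := fun v => v ord0) (g := fun _ => 0)
  (h := fun i _ _ => i) (j := fun y _ => y) _ _ _ _ _) _.
- exact: GrzProj.
- exact: Grz_const.
- exact: GrzProj.
- exact: GrzProj.
- by case.
- by move=> v /=; case: (v ord0).
Qed.

Lemma Grz_pred k (a : fn k) : Grz n a -> Grz n (fun x => (a x).-1).
Proof. exact: Grz_comp1 Grz1_predn. Qed.

Lemma Grz_sub k (a b : fn k) : Grz n a -> Grz n b -> Grz n (fun x => a x - b x).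
Proof.
apply: Grz_comp2.
apply: GrzExt (Grz_iteri (t := fun v => v ord_max) (g := fun v => v ord0)
  (h := fun _ r _ => r.-1) (j := fun _ v => v ord0) _ _ _ _ _) _.
- exact: GrzProj.
- exact: GrzProj.
- by apply: Grz_pred; apply: GrzProj.
- exact: GrzProj.
- by move=> y v; rewrite iteri_predn leq_subr.
- by move=> v; rewrite iteri_predn.
Qed.

Lemma Grz_leq k (a b : fn k) :
  Grz n a -> Grz n b -> Grz n (fun x => nat_of_bool (a x <= b x)).
Proof.
move=> Ha Hb; apply: GrzExt (Grz_sub (Grz_const _ 1) (Grz_sub Ha Hb)) _ => x.
by case: leqP; lia.
Qed.

End Closure.

Definition isqrt z := iteri z (fun _ m => if m.+1 * m.+1 <= z then m.+1 else m) 0.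

Lemma isqrt_spec s z : s * s <= z < s.+1 * s.+1 -> isqrt z = s.
Proof.
move=> /andP[lo hi].
have Hmin y : iteri y (fun _ m => if m.+1 * m.+1 <= z then m.+1 else m) 0 = minn y s.
  elim: y => [|y /= ->]; first by rewrite min0n.
  case: (leqP y s) => hys; case: ifP => hz; nia.
rewrite /isqrt Hmin; apply/minn_idPr; nia.
Qed.

Definition npair a b := (a + b) * (a + b) + a.
Definition nfst z := z - isqrt z * isqrt z.
Definition nsnd z := isqrt z - nfst z.

Lemma isqrt_npair a b : isqrt (npair a b) = a + b.
Proof. by apply: isqrt_spec; rewrite /npair; apply/andP; split; nia. Qed.

Lemma nfst_npair a b : nfst (npair a b) = a.
Proof. by rewrite /nfst isqrt_npair /npair addKn. Qed.

Lemma nsnd_npair a b : nsnd (npair a b) = b.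
Proof. by rewrite /nsnd nfst_npair isqrt_npair addKn. Qed.

Lemma leq_npair_r a b : b <= npair a b.
Proof.
rewrite /npair; have := leq_addl a b; case: (a + b) => [|s] le_b; first by lia.
by apply: leq_trans le_b _; rewrite mulSn -addnA leq_addr.
Qed.

Definition lcons a l := (npair a l).+1.
Definition lhd l := nfst l.-1.
Definition ltl l := nsnd l.-1.

Lemma lhd_lcons a l : lhd (lcons a l) = a.
Proof. exact: nfst_npair. Qed.

Lemma ltl_lcons a l : ltl (lcons a l) = l.
Proof. exact: nsnd_npair. Qed.

Section Arithmetic.

Variable n : nat.
Hypothesis Grz_op2_mul : Grz_op2 n muln.

Lemma Grz_mul k (a b : fn k) : Grz n a -> Grz n b -> Grz n (fun x => a x * b x).
Proof. exact: Grz_comp2. Qed.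

Lemma Grz_add k (a b : fn k) : Grz n a -> Grz n b -> Grz n (fun x => a x + b x).
Proof.
apply: Grz_comp2; apply: (Grz_op2_add_of_bound (j := fun x y => x.+1 * y.+1)) => [|x y].
  by apply: Grz_mul; apply: Grz_succ; apply: GrzProj.
nia.
Qed.

Lemma Grz_eqn k (a b : fn k) :
  Grz n a -> Grz n b -> Grz n (fun x => nat_of_bool (a x == b x)).
Proof.
move=> Ha Hb; apply: GrzExt (Grz_mul (Grz_leq Ha Hb) (Grz_leq Hb Ha)) _ => x.
by rewrite eqn_leq; case: (a x <= b x); case: (b x <= a x).
Qed.

Lemma Grz_if k (P : vec k -> bool) (a b : fn k) :
  Grz n (fun x => nat_of_bool (P x)) -> Grz n a -> Grz n b ->
  Grz n (fun x => if P x then a x else b x).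
Proof.
move=> HP Ha Hb.
apply: GrzExt (Grz_add (Grz_mul Ha HP) (Grz_mul Hb (Grz_sub (Grz_const _ _ 1) HP))) _ => x.
by case: (P x); rewrite /= ?muln1 ?muln0 ?addn0.
Qed.

Lemma Grz_isqrt k (a : fn k) : Grz n a -> Grz n (fun x => isqrt (a x)).
Proof.
apply: Grz_comp1.
apply: (Grz_iteri (t := fun v => v ord0) (g := fun _ => 0)
  (h := fun _ m v => if m.+1 * m.+1 <= v ord0 then m.+1 else m) (j := fun y _ => y)).
- exact: GrzProj.
- exact: Grz_const.
- apply: Grz_if; last exact: GrzProj.
  + by apply: Grz_leq; [apply: Grz_mul|]; do ?apply: Grz_succ; apply: GrzProj.
  + by apply: Grz_succ; apply: GrzProj.
- exact: GrzProj.
- move=> y v; elim: y => //= y IHy; case: ifP => _; lia.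
Qed.

Lemma Grz_npair k (a b : fn k) : Grz n a -> Grz n b -> Grz n (fun x => npair (a x) (b x)).
Proof. by move=> Ha Hb; apply: Grz_add => //; apply: Grz_mul; apply: Grz_add. Qed.

Lemma Grz_nfst k (a : fn k) : Grz n a -> Grz n (fun x => nfst (a x)).
Proof.
by rewrite /nfst => Ha; apply: Grz_sub Ha (Grz_mul (Grz_isqrt Ha) (Grz_isqrt Ha)).
Qed.

Lemma Grz_nsnd k (a : fn k) : Grz n a -> Grz n (fun x => nsnd (a x)).
Proof. rewrite /nsnd => Ha; exact: Grz_sub (Grz_isqrt Ha) (Grz_nfst Ha). Qed.

Lemma Grz_lcons k (a b : fn k) : Grz n a -> Grz n b -> Grz n (fun x => lcons (a x) (b x)).
Proof. by rewrite /lcons => Ha Hb; apply: Grz_succ; apply: Grz_npair. Qed.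

Lemma Grz_lhd k (a : fn k) : Grz n a -> Grz n (fun x => lhd (a x)).
Proof. rewrite /lhd => Ha; exact: Grz_nfst (Grz_pred Ha). Qed.

Lemma Grz_ltl k (a : fn k) : Grz n a -> Grz n (fun x => ltl (a x)).
Proof. rewrite /ltl => Ha; exact: Grz_nsnd (Grz_pred Ha). Qed.

End Arithmetic.

Lemma Grz_op2_mul2 : Grz_op2 2 muln.
Proof. exact: GrzF. Qed.

Lemma fgrz3E a b : fgrz 3 a b = a ^ b.
Proof. by elim: b => //= b IHb; rewrite /= in IHb; rewrite IHb expnS. Qed.

Lemma Grz_exp3 k (a b : fn k) : Grz 3 a -> Grz 3 b -> Grz 3 (fun x => a x ^ b x).
Proof. by apply: Grz_comp2; apply: GrzExt (GrzF 3) _ => v; apply: fgrz3E. Qed.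

Lemma Grz_op2_mul3 : Grz_op2 3 muln.
Proof.
have Hbound x y : x * y + x + y <= x.+2 ^ y.+2.
  have h2 := ltn_expl y.+1 (isT : 1 < 2).
  have hx : 2 ^ y.+1 <= x.+2 ^ y.+1 by rewrite leq_exp2r.
  rewrite (expnS x.+2); nia.
have Hexp : Grz_op2 3 (fun x y => x.+2 ^ y.+2).
  by apply: Grz_exp3; do 2 apply: Grz_succ; apply: GrzProj.
have Hadd : Grz_op2 3 addn.
  by apply: (Grz_op2_add_of_bound Hexp) => x y; have := Hbound x y; lia.
by apply: (Grz_op2_mul_of_bound Hadd Hexp) => x y; have := Hbound x y; lia.
Qed.

Lemma Grz2_sub_Grz3 k (f : fn k) : Grz 2 f -> Grz 3 f.
Proof.
elim=> {k f}.
- exact: GrzZero.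
- exact: GrzSucc.
- exact: GrzProj.
- exact: Grz_op2_mul3.
- by move=> m k f gs _ Hf _ Hgs; apply: GrzComp.
- by move=> m g h j _ Hg _ Hh _ Hj Hb; apply: GrzBRec Hg Hh Hj Hb.
- by move=> k f g _ Hf Hfg; apply: GrzExt Hf Hfg.
Qed.

(** * Polynomially bounded functions *)

Lemma leq_exp2rW m1 m2 e : m1 <= m2 -> m1 ^ e <= m2 ^ e.
Proof. by move=> le_m; case: e => // e; rewrite leq_exp2r. Qed.

Section PowerBounds.

Variables (N : nat) (a b p q : nat).
Hypothesis N_gt1 : 1 < N.

Lemma pow_bound_const : a <= N ^ a.
Proof. exact/ltnW/ltn_expl. Qed.

Lemma pow_bound_mul : a <= N ^ p -> b <= N ^ q -> a * b <= N ^ (p + q).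
Proof. by move=> ha hb; rewrite expnD; apply: leq_mul. Qed.

Lemma pow_bound_add : a <= N ^ p -> b <= N ^ q -> a + b <= N ^ (p + q).+1.
Proof.
move=> ha hb.
have hp : N ^ p <= N ^ (p + q) by rewrite leq_exp2l // leq_addr.
have hq : N ^ q <= N ^ (p + q) by rewrite leq_exp2l // leq_addl.
rewrite expnS; nia.
Qed.

End PowerBounds.

Definition poly_bounded k (f : fn k) := exists d, forall x, f x <= (\sum_(i < k) x i + 2) ^ d.

Section PolyBounded.

Variable k : nat.
Implicit Types f g : fn k.

Let N_gt1 (x : vec k) : 1 < \sum_(i < k) x i + 2.
Proof. by rewrite addn2. Qed.

Lemma poly_bounded_const c : poly_bounded (fun _ : vec k => c).
Proof. by exists c => x; apply: pow_bound_const. Qed.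

Lemma poly_bounded_proj i : poly_bounded (fun x : vec k => x i).
Proof. by exists 1 => x; rewrite expn1 (bigD1 i) //= -addnA leq_addr. Qed.

Lemma poly_bounded_le f g : (forall x, f x <= g x) -> poly_bounded g -> poly_bounded f.
Proof. by move=> le_fg [d Hd]; exists d => x; apply: leq_trans (le_fg x) (Hd x). Qed.

Lemma poly_bounded_add f g : poly_bounded f -> poly_bounded g -> poly_bounded (fun x => f x + g x).
Proof. by move=> [p Hp] [q Hq]; exists (p + q).+1 => x; apply: pow_bound_add. Qed.

Lemma poly_bounded_succ f : poly_bounded f -> poly_bounded (fun x => (f x).+1).
Proof.
move=> Hf; apply: poly_bounded_le (poly_bounded_add Hf (poly_bounded_const 1)) => x.
by rewrite addn1.
Qed.

Lemma poly_bounded_mul f g : poly_bounded f -> poly_bounded g -> poly_bounded (fun x => f x * g x).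
Proof. by move=> [p Hp] [q Hq]; exists (p + q) => x; apply: pow_bound_mul. Qed.

Lemma poly_bounded_expn f c : poly_bounded f -> poly_bounded (fun x => f x ^ c).
Proof.
move=> Hf; elim: c => [|c IHc]; first exact: poly_bounded_const.
by apply: poly_bounded_le (poly_bounded_mul Hf IHc) => x; rewrite expnS.
Qed.

Lemma poly_bounded_sum m (F : 'I_m -> fn k) :
  (forall i, poly_bounded (F i)) -> poly_bounded (fun x => \sum_(i < m) F i x).
Proof.
elim: m F => [|m IHm] F HF.
  by apply: poly_bounded_le (poly_bounded_const 0) => x; rewrite big_ord0.
apply: poly_bounded_le (poly_bounded_add (HF ord0) (IHm _ (fun i => HF (lift ord0 i)))) => x.
by rewrite big_ord_recl.
Qed.

End PolyBounded.

Lemma poly_bounded_comp m k (f : fn m) (gs : 'I_m -> fn k) :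
  poly_bounded f -> (forall i, poly_bounded (gs i)) ->
  poly_bounded (fun x => f (fun i => gs i x)).
Proof.
move=> [d Hd] Hgs.
have [p Hp] := poly_bounded_add (poly_bounded_sum Hgs) (poly_bounded_const k 2).
exists (p * d) => x; apply: leq_trans (Hd _) _.
by rewrite expnM; apply: leq_exp2rW; apply: Hp.
Qed.

Lemma Grz2_poly_bounded k (f : fn k) : Grz 2 f -> poly_bounded f.
Proof.
elim=> {k f}.
- by move=> k; apply: poly_bounded_const.
- exact: poly_bounded_succ (poly_bounded_proj _).
- exact: poly_bounded_proj.
- exact: poly_bounded_mul (poly_bounded_proj _) (poly_bounded_proj _).
- by move=> m k f gs _ Hf _ Hgs; apply: poly_bounded_comp.
- by move=> m g h j _ _ _ _ _ Hj Hb; apply: poly_bounded_le Hj.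
- by move=> k f g _ [d Hd] Hfg; exists d => x; rewrite -Hfg.
Qed.

(** * A stack machine for E^2 *)

(* A state pairs a control stack K of frames with a value stack V, both lists
   in the lcons encoding.  [frame_eval c r] evaluates program c on the argument
   list r and pushes the result; [frame_args gs r] evaluates the programs of
   the list gs on r; [frame_gather m acc cf] pops m values into acc and calls
   cf on them; [frame_loop ch xs i y] performs the recursion steps i, ..., y-1
   of ch, the current value being on top of V. *)

Definition code_zero := npair 0 0.
Definition code_succ := npair 1 0.
Definition code_proj i := npair 2 i.
Definition code_mul := npair 3 0.
Definition code_comp cf m gs := npair 4 (npair cf (npair m gs)).
Definition code_rec cg ch := npair 5 (npair cg ch).

Definition frame_eval c r := npair 0 (npair c r).
Definition frame_proj i r := npair 1 (npair i r).
Definition frame_args gs r := npair 2 (npair gs r).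
Definition frame_gather m acc cf := npair 3 (npair m (npair acc cf)).
Definition frame_loop ch xs i y := npair 4 (npair ch (npair xs (npair i y))).
Definition state K V := npair K V.

Definition step_eval c r K V :=
  if nfst c == 0 then state K (lcons 0 V)
  else if nfst c == 1 then state K (lcons (lhd r).+1 V)
  else if nfst c == 2 then state (lcons (frame_proj (nsnd c) r) K) V
  else if nfst c == 3 then state K (lcons (lhd r * lhd (ltl r)) V)
  else if nfst c == 4 then
    state (lcons (frame_args (nsnd (nsnd (nsnd c))) r)
            (lcons (frame_gather (nfst (nsnd (nsnd c))) 0 (nfst (nsnd c))) K)) V
  else state (lcons (frame_eval (nfst (nsnd c)) (ltl r))
               (lcons (frame_loop (nsnd (nsnd c)) (ltl r) 0 (lhd r)) K)) V.

Definition step_proj i r K V :=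
  if i == 0 then state K (lcons (lhd r) V)
  else state (lcons (frame_proj i.-1 (ltl r)) K) V.

Definition step_args gs r K V :=
  if gs == 0 then state K V
  else state (lcons (frame_eval (lhd gs) r) (lcons (frame_args (ltl gs) r) K)) V.

Definition step_gather m acc cf K V :=
  if m == 0 then state (lcons (frame_eval cf acc) K) V
  else state (lcons (frame_gather m.-1 (lcons (lhd V) acc) cf) K) (ltl V).

Definition step_loop ch xs i y K V :=
  if i == y then state K V
  else state (lcons (frame_eval ch (lcons i (lcons (lhd V) xs)))
                (lcons (frame_loop ch xs i.+1 y) K)) (ltl V).

Definition step_frame f K V :=
  if nfst f == 0 then step_eval (nfst (nsnd f)) (nsnd (nsnd f)) K V
  else if nfst f == 1 then step_proj (nfst (nsnd f)) (nsnd (nsnd f)) K V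
  else if nfst f == 2 then step_args (nfst (nsnd f)) (nsnd (nsnd f)) K V
  else if nfst f == 3 then
    step_gather (nfst (nsnd f)) (nfst (nsnd (nsnd f))) (nsnd (nsnd (nsnd f))) K V
  else step_loop (nfst (nsnd f)) (nfst (nsnd (nsnd f)))
         (nfst (nsnd (nsnd (nsnd f)))) (nsnd (nsnd (nsnd (nsnd f)))) K V.

Definition step s :=
  if nfst s == 0 then s else step_frame (lhd (nfst s)) (ltl (nfst s)) (nsnd s).

(* [Grz_eqn] and [Grz_leq] must be tried before [Grz_if]: a boolean coerced to
   nat is itself an if-expression. *)
Ltac grz_step hmul :=
  first
    [ exact: GrzProj
    | apply: Grz_const
    | apply: (Grz_eqn hmul)
    | apply: Grz_leq
    | apply: (Grz_if hmul)
    | apply: (Grz_lcons hmul)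
    | apply: (Grz_lhd hmul)
    | apply: (Grz_ltl hmul)
    | apply: (Grz_npair hmul)
    | apply: (Grz_nfst hmul)
    | apply: (Grz_nsnd hmul)
    | apply: Grz_succ
    | apply: Grz_pred
    | apply: (Grz_add hmul)
    | apply: (Grz_mul hmul)
    | apply: Grz_sub ].

Ltac grz_closure hmul := repeat grz_step hmul.

Lemma Grz1_step : Grz1 2 step.
Proof.
rewrite /Grz1 /step /step_frame /step_eval /step_proj /step_args /step_gather /step_loop
  /state /frame_eval /frame_proj /frame_args /frame_gather /frame_loop.
grz_closure Grz_op2_mul2.
Qed.

Arguments npair : simpl never.

Ltac step_simpl :=
  rewrite /step /step_frame /step_eval /step_proj /step_args /step_gather /step_loop
    /code_zero /code_succ /code_proj /code_mul /code_comp /code_rec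
    /frame_eval /frame_proj /frame_args /frame_gather /frame_loop /state;
  rewrite ?(nfst_npair, nsnd_npair, lhd_lcons, ltl_lcons) /=.

Section StepEquations.

Variables (K V r i m acc c cf cg ch gs xs y : nat).

Lemma step_halt : step (state 0 V) = state 0 V.
Proof. by step_simpl. Qed.

Lemma step_eval_zero : step (state (lcons (frame_eval code_zero r) K) V) = state K (lcons 0 V).
Proof. by step_simpl. Qed.

Lemma step_eval_succ :
  step (state (lcons (frame_eval code_succ r) K) V) = state K (lcons (lhd r).+1 V).
Proof. by step_simpl. Qed.

Lemma step_eval_proj :
  step (state (lcons (frame_eval (code_proj i) r) K) V) = state (lcons (frame_proj i r) K) V.
Proof. by step_simpl. Qed.

Lemma step_eval_mul :
  step (state (lcons (frame_eval code_mul r) K) V) = state K (lcons (lhd r * lhd (ltl r)) V).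
Proof. by step_simpl. Qed.

Lemma step_eval_comp :
  step (state (lcons (frame_eval (code_comp cf m gs) r) K) V) =
  state (lcons (frame_args gs r) (lcons (frame_gather m 0 cf) K)) V.
Proof. by step_simpl. Qed.

Lemma step_eval_rec :
  step (state (lcons (frame_eval (code_rec cg ch) r) K) V) =
  state (lcons (frame_eval cg (ltl r)) (lcons (frame_loop ch (ltl r) 0 (lhd r)) K)) V.
Proof. by step_simpl. Qed.

Lemma step_proj0 : step (state (lcons (frame_proj 0 r) K) V) = state K (lcons (lhd r) V).
Proof. by step_simpl. Qed.

Lemma step_projS :
  step (state (lcons (frame_proj i.+1 r) K) V) = state (lcons (frame_proj i (ltl r)) K) V.
Proof. by step_simpl. Qed.

Lemma step_args_nil : step (state (lcons (frame_args 0 r) K) V) = state K V.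
Proof. by step_simpl. Qed.

Lemma step_args_cons :
  step (state (lcons (frame_args (lcons c gs) r) K) V) =
  state (lcons (frame_eval c r) (lcons (frame_args gs r) K)) V.
Proof. by step_simpl. Qed.

Lemma step_gather0 :
  step (state (lcons (frame_gather 0 acc cf) K) V) = state (lcons (frame_eval cf acc) K) V.
Proof. by step_simpl. Qed.

Lemma step_gatherS :
  step (state (lcons (frame_gather m.+1 acc cf) K) (lcons y V)) =
  state (lcons (frame_gather m (lcons y acc) cf) K) V.
Proof. by step_simpl. Qed.

Lemma step_loop_end : step (state (lcons (frame_loop ch xs y y) K) V) = state K V.
Proof. by step_simpl; rewrite eqxx. Qed.

Lemma step_loop_next : i != y ->
  step (state (lcons (frame_loop ch xs i y) K) (lcons r V)) =
  state (lcons (frame_eval ch (lcons i (lcons r xs))) (lcons (frame_loop ch xs i.+1 y) K)) V.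
Proof. by move=> /negbTE ne_iy; step_simpl; rewrite ne_iy. Qed.

End StepEquations.

Fixpoint enc_app k : vec k -> nat -> nat :=
  match k with
  | 0 => fun _ acc => acc
  | k'.+1 => fun x acc => lcons (x ord0) (enc_app (vtail x) acc)
  end.

Definition enc k (x : vec k) := enc_app x 0.

Fixpoint push_all k : vec k -> nat -> nat :=
  match k with
  | 0 => fun _ V => V
  | k'.+1 => fun x V => push_all (vtail x) (lcons (x ord0) V)
  end.

Lemma enc_S k (x : vec k.+1) : enc x = lcons (x ord0) (enc (vtail x)).
Proof. by []. Qed.

Lemma enc_vcons k a (v : vec k) : enc (vcons a v) = lcons a (enc v).
Proof. by rewrite /enc /= vcons0 vtail_vcons. Qed.

Definition runs_within k (c : nat) (f S : fn k) :=
  forall x K V, exists2 t, t <= S x &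
    iter t step (state (lcons (frame_eval c (enc x)) K) V) = state K (lcons (f x) V).

Lemma run_proj k (x : vec k) (i : 'I_k) K V :
  iter i.+1 step (state (lcons (frame_proj i (enc x)) K) V) = state K (lcons (x i) V).
Proof.
elim: k x i => [|k IHk] x i; first by case: i.
case: (unliftP ord0 i) => [j ->|->]; last by rewrite /= step_proj0 lhd_lcons.
by rewrite lift0 iterSr step_projS ltl_lcons IHk.
Qed.

Lemma run_args m r (cs w : vec m) (B : 'I_m -> nat) K V :
  (forall i K V, exists2 t, t <= B i &
     iter t step (state (lcons (frame_eval (cs i) r) K) V) = state K (lcons (w i) V)) ->
  exists2 t, t <= \sum_(i < m) (B i).+1 + 1 &
    iter t step (state (lcons (frame_args (enc cs) r) K) V) = state K (push_all w V).
Proof.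
elim: m cs w B K V => [|m IHm] cs w B K V Hcs.
  by exists 1; [rewrite big_ord0 | apply: step_args_nil].
have [t0 le_t0 run0] := Hcs ord0 (lcons (frame_args (enc (vtail cs)) r) K) V.
have [t1 le_t1 run1] :=
  IHm (vtail cs) (vtail w) (fun i => B (lift ord0 i)) K (lcons (w ord0) V) (fun i => Hcs _).
exists (t1 + t0).+1; first by rewrite big_ord_recl; lia.
by rewrite iterSr enc_S step_args_cons iterD run0.
Qed.

Lemma run_gather m j acc (w : vec m) cf K V :
  iter m step (state (lcons (frame_gather (m + j) acc cf) K) (push_all w V)) =
  state (lcons (frame_gather j (enc_app w acc) cf) K) V.
Proof.
elim: m j w V => [|m IHm] j w V //.
by rewrite iterS addSnnS [push_all _ _]/= IHm step_gatherS.
Qed.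

Section Loop.

Variables (m : nat) (g : fn m) (h : fn m.+2) (xs : vec m) (ch y : nat) (S : nat -> nat).

Let w i := vcons i (vcons (primrec g h i xs) xs).

Hypothesis runs_body : forall i K V, i < y -> exists2 t, t <= S i &
  iter t step (state (lcons (frame_eval ch (enc (w i))) K) V) = state K (lcons (h (w i)) V).

Lemma run_loop i K V : i <= y -> exists2 t, t <= \sum_(i <= j < y) (S j).+1 + 1 &
  iter t step (state (lcons (frame_loop ch (enc xs) i y) K) (lcons (primrec g h i xs) V)) =
  state K (lcons (primrec g h y xs) V).
Proof.
move Hd : (y - i) => d; elim: d i Hd => [|d IHd] i Hd le_iy.
  have -> : i = y by lia.
  by exists 1; rewrite ?big_geq //= step_loop_end.
have lt_iy : i < y by lia.
have [t0 le_t0 run0] := runs_body (lcons (frame_loop ch (enc xs) i.+1 y) K) V lt_iy.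
have [t1 le_t1 run1] := IHd i.+1 ltac:(lia) lt_iy.
exists (t1 + t0).+1; first by rewrite big_ltn //; lia.
rewrite iterSr step_loop_next ?neq_ltn ?lt_iy // -!enc_vcons iterD run0.
exact: run1.
Qed.

End Loop.

Lemma runs_zero k : runs_within code_zero (fun _ : vec k => 0) (fun _ => 1).
Proof. by move=> x K V; exists 1; rewrite //= step_eval_zero. Qed.

Lemma runs_succ : runs_within code_succ (fun x : vec 1 => (x ord0).+1) (fun _ => 1).
Proof. by move=> x K V; exists 1; rewrite //= step_eval_succ lhd_lcons. Qed.

Lemma runs_proj k (i : 'I_k) : runs_within (code_proj i) (fun x => x i) (fun _ => k.+1).
Proof.
by move=> x K V; exists i.+2; rewrite ?ltnS // iterSr step_eval_proj run_proj.
Qed.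

Lemma runs_mul :
  runs_within code_mul (fun x : vec 2 => fgrz 2 (x ord0) (x ord_max)) (fun _ => 1).
Proof.
move=> x K V; exists 1 => //.
rewrite /= step_eval_mul /enc /= lhd_lcons ltl_lcons lhd_lcons.
by congr (state K (lcons (_ * x _) V)); apply: val_inj.
Qed.

Lemma runs_comp m k cf (f : fn m) Sf (cs : vec m) (gs Sg : 'I_m -> fn k) :
  runs_within cf f Sf -> (forall i, runs_within (cs i) (gs i) (Sg i)) ->
  runs_within (code_comp cf m (enc cs)) (fun x => f (fun i => gs i x))
    (fun x => Sf (fun i => gs i x) + \sum_(i < m) (Sg i x).+1 + m + 3).
Proof.
move=> runs_f runs_gs x K V.
have [tA le_tA runA] :=
  run_args (B := fun i => Sg i x) (lcons (frame_gather m 0 cf) K) V (fun i => runs_gs i x).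
have [tf le_tf runf] := runs_f (fun i => gs i x) K V.
exists (tf + (m + tA).+2); first lia.
rewrite iterD iterSr step_eval_comp iterS iterD runA.
have := run_gather 0 0 (fun i => gs i x) cf K V; rewrite addn0 => ->.
by rewrite step_gather0 runf.
Qed.

Lemma runs_rec m cg ch (g : fn m) (h : fn m.+2) Sg Sh :
  runs_within cg g Sg -> runs_within ch h Sh ->
  runs_within (code_rec cg ch) (fun x : vec m.+1 => primrec g h (x ord0) (vtail x))
    (fun x => Sg (vtail x) +
       \sum_(j < x ord0) (Sh (vcons j (vcons (primrec g h j (vtail x)) (vtail x)))).+1 + 2).
Proof.
move=> runs_g runs_h x K V.
have [tg le_tg rung] :=
  runs_g (vtail x) (lcons (frame_loop ch (enc (vtail x)) 0 (x ord0)) K) V.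
have [tl le_tl runl] := run_loop (ch := ch) (y := x ord0)
  (S := fun j => Sh (vcons j (vcons (primrec g h j (vtail x)) (vtail x))))
  (fun j K V _ => runs_h _ K V) K V (leq0n (x ord0)).
exists (tl + tg).+1; first by rewrite big_mkord in le_tl; lia.
by rewrite iterSr enc_S step_eval_rec ltl_lcons lhd_lcons iterD rung runl.
Qed.

Lemma poly_bounded_loop_cost m (F : fn m.+1) (S : fn m.+2) :
  poly_bounded F -> poly_bounded S ->
  poly_bounded (fun x : vec m.+1 =>
    \sum_(j < x ord0) (S (vcons j (vcons (F (vcons j (vtail x))) (vtail x)))).+1).
Proof.
move=> [dF HF] [dS HS].
pose N (x : vec m.+1) := \sum_(i < m.+1) x i + 2.
pose e := (1 + dF).+1 * dS.
have HSj x (j : 'I_(x ord0)) :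
    S (vcons j (vcons (F (vcons j (vtail x))) (vtail x))) <= N x ^ e.
  have hx : \sum_(i < m.+1) x i = x ord0 + \sum_(i < m) vtail x i by rewrite big_ord_recl.
  have hj := ltn_ord j.
  have hF : F (vcons j (vtail x)) <= N x ^ dF.
    by apply: leq_trans (HF _) _; apply: leq_exp2rW; rewrite sum_vcons /N; lia.
  have hN : N x <= N x ^ 1 by rewrite expn1.
  apply: leq_trans (HS _) _; rewrite /e expnM; apply: leq_exp2rW.
  apply: leq_trans (pow_bound_add _ hN hF); first by rewrite !sum_vcons /N; lia.
  by rewrite /N addn2.
have Hbound : poly_bounded (fun x : vec m.+1 => x ord0 * (N x ^ e).+1).
  apply: poly_bounded_mul (poly_bounded_proj _) _; apply: poly_bounded_succ.
  apply: poly_bounded_expn; apply: poly_bounded_add (poly_bounded_const _ 2).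
  exact: poly_bounded_sum (fun i => poly_bounded_proj i).
apply: poly_bounded_le Hbound => x.
apply: (@leq_trans (\sum_(j < x ord0) (N x ^ e).+1)).
  by apply: leq_sum => j _; rewrite ltnS HSj.
by rewrite sum_nat_const card_ord.
Qed.

Theorem Grz2_runs k (f : fn k) : Grz 2 f -> exists c S, poly_bounded S /\ runs_within c f S.
Proof.
elim=> {k f}.
- move=> k; exists code_zero, (fun _ => 1).
  by split; [apply: poly_bounded_const | apply: runs_zero].
- exists code_succ, (fun _ => 1).
  by split; [apply: poly_bounded_const | apply: runs_succ].
- move=> k i; exists (code_proj i), (fun _ => k.+1).
  by split; [apply: poly_bounded_const | apply: runs_proj].
- exists code_mul, (fun _ => 1).
  by split; [apply: poly_bounded_const | apply: runs_mul].
- move=> m k f gs _ [cf [Sf [pb_f runs_f]]] Hgs IHgs.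
  have [cs /fin_all_exists [Sg HSg]] := fin_all_exists IHgs.
  exists (code_comp cf m (enc cs)),
    (fun x => Sf (fun i => gs i x) + \sum_(i < m) (Sg i x).+1 + m + 3).
  split; last by apply: runs_comp runs_f (fun i => (HSg i).2).
  repeat apply: poly_bounded_add; try exact: poly_bounded_const.
    exact: poly_bounded_comp pb_f (fun i => Grz2_poly_bounded (Hgs i)).
  exact: poly_bounded_sum (fun i => poly_bounded_succ (HSg i).1).
- move=> m g h j Gg [cg [Sg [pb_g runs_g]]] Gh [ch [Sh [pb_h runs_h]]] Gj _ Hb.
  exists (code_rec cg ch), (fun x => Sg (vtail x) +
    \sum_(i < x ord0) (Sh (vcons i (vcons (primrec g h i (vtail x)) (vtail x)))).+1 + 2).
  split; last exact: runs_rec.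
  apply: poly_bounded_add (poly_bounded_const _ 2); apply: poly_bounded_add.
    exact: poly_bounded_comp pb_g (fun i => poly_bounded_proj (lift ord0 i)).
  have pb_rec := Grz2_poly_bounded (GrzBRec Gg Gh Gj Hb).
  apply: poly_bounded_le (poly_bounded_loop_cost pb_rec pb_h) => x.
  by apply: leq_sum => i _; rewrite vcons0 vtail_vcons.
- move=> k f g _ [c [S [pb_S runs]]] Hfg; exists c, S; split=> // x K V.
  by rewrite -Hfg; apply: runs.
Qed.

(** * The diagonal real *)

Lemma iter_halt t V : iter t step (state 0 V) = state 0 V.
Proof. by elim: t => //= t ->; apply: step_halt. Qed.

Lemma step_pow_bound : exists e, forall s, step s + 2 <= (s + 2) ^ e.
Proof.
have [d Hd] := Grz2_poly_bounded Grz1_step.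
exists (d + 1).+1 => s; apply: pow_bound_add; rewrite ?expn1 ?addn2 //.
by have := Hd (fun _ => s); rewrite big_ord1 addn2.
Qed.

Lemma iter_step_pow_bound e t s :
  (forall s, step s + 2 <= (s + 2) ^ e) -> iter t step s + 2 <= (s + 2) ^ (e ^ t).
Proof.
move=> He; elim: t => [|t IHt]; first by rewrite expn1.
by rewrite iterS expnSr expnM; apply: leq_trans (He _) (leq_exp2rW _ IHt).
Qed.

Lemma Grz_iter_step k (a b : fn k) : Grz 3 a -> Grz 3 b -> Grz 3 (fun x => iter (a x) step (b x)).
Proof.
have [e He] := step_pow_bound.
have iteriE y s : iteri y (fun _ => step) s = iter y step s by elim: y => //= y ->.
apply: (Grz_comp2 (F := fun t s => iter t step s)).
apply: GrzExt (Grz_iteri (t := fun v => v ord0) (g := fun v => v ord_max)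
  (h := fun _ r _ => step r) (j := fun y v => (v ord_max + 2) ^ (e ^ y)) _ _ _ _ _) _.
- exact: GrzProj.
- exact: GrzProj.
- by apply: Grz_comp1 (Grz2_sub_Grz3 Grz1_step) _; apply: GrzProj.
- apply: Grz_exp3; last by apply: Grz_exp3; [apply: Grz_const | apply: GrzProj].
  by apply: (Grz_add Grz_op2_mul3); [apply: GrzProj | apply: Grz_const].
- by move=> y v; rewrite iteriE (leq_trans (leq_addr 2 _)) // iter_step_pow_bound.
- by move=> v; rewrite iteriE.
Qed.

Definition run c X T :=
  lhd (nsnd (iter T step (state (lcons (frame_eval c (lcons X 0)) 0) 0))).

Lemma run_Grz2 f : Grz1 2 f -> exists c d, forall X T, (X + 2) ^ d <= T -> run c X T = f X.
Proof.
move=> /Grz2_runs [c [S [[d Hd] runs]]]; exists c, d => X T le_T.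
have [t le_t run_t] := runs (fun _ => X) 0 0.
have le_tT : t <= T by rewrite (leq_trans le_t) // (leq_trans (Hd _)) // big_ord1.
by rewrite /run -(subnK le_tT) iterD run_t iter_halt /state nsnd_npair lhd_lcons.
Qed.

Definition diag_point k := 4 ^ k.+2 - 1.
Definition diag_time k := (diag_point k + 2) ^ k.
Definition diag_run c k := run c (diag_point k) (diag_time k).

(* With U = 4^(k+1): true iff (f - g)/(h + 1) * U < 4q + 4/3.  Digit k is then
   2, which puts alpha * U at least 4q + 2; otherwise it is 0 and alpha * U is at
   most 4q + 2/3.  Either way alpha * U is more than 1/4 away. *)
Definition approx_below f g h q U := 3 * U * f < (12 * q + 4) * h.+1 + 3 * U * g.

Definition digit k q :=
  approx_below (diag_run (nfst (nfst k)) k) (diag_run (nfst (nsnd (nfst k))) k)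
    (diag_run (nsnd (nsnd (nfst k))) k) q (4 ^ k.+1).

Definition alpha_num k := iteri k (fun i q => 4 * q + 2 * digit i q) 0.

Lemma alpha_num_lt k : alpha_num k < 4 ^ k.
Proof. by elim: k => //= k IHk; rewrite expnS; case: (digit k _); lia. Qed.

Lemma Grz1_alpha_num : Grz1 3 alpha_num.
Proof.
apply: (Grz_iteri (t := fun v => v ord0) (g := fun _ => 0)
  (h := fun i q _ => 4 * q + 2 * digit i q) (j := fun y _ => 4 ^ y)).
- exact: GrzProj.
- exact: Grz_const.
- rewrite /digit /approx_below /diag_run /run /diag_time /diag_point /state /frame_eval.
  repeat first [apply: Grz_iter_step | apply: Grz_exp3 | grz_step Grz_op2_mul3].
- by apply: Grz_exp3; [apply: Grz_const | apply: GrzProj].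
- by move=> y _; apply: ltnW; apply: alpha_num_lt.
Qed.

Lemma alpha_numS k : alpha_num k.+1 = 4 * alpha_num k + 2 * digit k (alpha_num k).
Proof. by []. Qed.

Lemma alpha_num_lower n t : 4 ^ t * alpha_num n <= alpha_num (n + t).
Proof.
elim: t => [|t IHt]; first by rewrite addn0 mul1n.
by rewrite addnS alpha_numS expnS -mulnA; lia.
Qed.

Lemma alpha_num_upper n t : 3 * alpha_num (n + t) + 2 <= 4 ^ t * (3 * alpha_num n + 2).
Proof.
elim: t => [|t IHt]; first by rewrite addn0 mul1n.
by rewrite (addnS n t) alpha_numS expnS -mulnA; case: (digit _ _); lia.
Qed.

Local Open Scope R_scope.

Lemma INR_pow4 n : INR (4 ^ n)%N = 4 ^ n.
Proof. by elim: n => //= n IHn; rewrite expnS mult_INR IHn /=; ring. Qed.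

Lemma pow4_gt0 n : 0 < 4 ^ n.
Proof. by apply: pow_lt; lra. Qed.

Definition alpha_approx n := INR (alpha_num n) / 4 ^ n.

Lemma alpha_approx_mono n m : (n <= m)%N -> alpha_approx n <= alpha_approx m.
Proof.
move=> /subnKC <-; set t := (m - n)%N.
have := le_INR _ _ (leP (alpha_num_lower n t)); rewrite mult_INR INR_pow4 => le_num.
have hn := pow4_gt0 n; have ht := pow4_gt0 t.
rewrite /alpha_approx pow_add.
have -> : INR (alpha_num n) / 4 ^ n = 4 ^ t * INR (alpha_num n) / (4 ^ n * 4 ^ t).
  by field; lra.
by apply: Rmult_le_compat_r => //; left; apply: Rinv_0_lt_compat; nra.
Qed.

Lemma alpha_approx_le n m : alpha_approx m <= alpha_approx n + 2 / (3 * 4 ^ n).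
Proof.
have hn := pow4_gt0 n.
have h0 : 0 <= 2 / (3 * 4 ^ n) by apply: Rlt_le; apply: Rdiv_lt_0_compat; lra.
case: (leqP n m) => [/subnKC <-|/ltnW /alpha_approx_mono]; last lra.
set t := (m - n)%N.
have := le_INR _ _ (leP (alpha_num_upper n t)).
rewrite ?(plus_INR, mult_INR, INR_pow4) /= => le_num.
have ht := pow4_gt0 t.
rewrite /alpha_approx pow_add.
have -> : INR (alpha_num n) / 4 ^ n + 2 / (3 * 4 ^ n) =
          4 ^ t * (3 * INR (alpha_num n) + 2) / 3 / (4 ^ n * 4 ^ t) by field; lra.
by apply: Rmult_le_compat_r; [left; apply: Rinv_0_lt_compat; nra | lra].
Qed.

Lemma alpha_approx_growing : Un_growing alpha_approx.
Proof. by move=> n; apply: alpha_approx_mono. Qed.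

Lemma alpha_approx_has_ub : has_ub alpha_approx.
Proof. by exists (alpha_approx 0 + 2 / (3 * 4 ^ 0)) => _ [m ->]; apply: alpha_approx_le. Qed.

Definition alpha := proj1_sig (growing_cv _ alpha_approx_growing alpha_approx_has_ub).

Lemma alpha_bounds n : alpha_approx n <= alpha <= alpha_approx n + 2 / (3 * 4 ^ n).
Proof.
have cv_alpha := proj2_sig (growing_cv _ alpha_approx_growing alpha_approx_has_ub).
split; first exact: growing_ineq alpha_approx_growing cv_alpha n.
apply: (Rle_cv_lim (fun m => alpha_approx_le n m) cv_alpha) => eps eps_gt0.
by exists 0%N => m _; rewrite /Rdist Rminus_diag Rabs_R0.
Qed.

Lemma alpha_E3 : Ecomputable 3 alpha.
Proof.
exists alpha_num, (fun _ => 0%N), (fun x => 4 ^ x - 1)%N; split; first exact: Grz1_alpha_num.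
split; first exact: Grz_const.
split; first by apply: Grz_sub; [apply: Grz_exp3; [apply: Grz_const | apply: GrzProj] |
                                 apply: Grz_const].
move=> x; have hx := pow4_gt0 x; have [lo hi] := alpha_bounds x.
have -> : seqA alpha_num (fun _ => 0%N) (fun x => 4 ^ x - 1)%N x = alpha_approx x.
  rewrite /seqA minus_INR ?INR_pow4 /alpha_approx /=; first by field; lra.
  by apply/leP; rewrite expn_gt0.
have hx1 : (INR x + 1) * 2 <= 3 * 4 ^ x.
  have := le_INR _ _ (leP (ltn_expl x (isT : (1 < 4)%N))); rewrite INR_pow4 S_INR; lra.
have : 2 / (3 * 4 ^ x) <= 1 / (INR x + 1).
  apply: (Rmult_le_reg_r ((3 * 4 ^ x) * (INR x + 1))); first by have := pos_INR x; nra.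
  by field_simplify; [lra | have := pos_INR x; lra | lra].
rewrite Rabs_left1; lra.
Qed.

Lemma approx_belowP f g h q U :
  reflect ((INR f - INR g) / (INR h + 1) * INR U < 4 * INR q + 4 / 3)
          (approx_below f g h q U).
Proof.
have hh := pos_INR h.
have E : INR (3 * U * f) - INR ((12 * q + 4) * h.+1 + 3 * U * g) =
         3 * (INR h + 1) * ((INR f - INR g) / (INR h + 1) * INR U - (4 * INR q + 4 / 3)).
  by rewrite ?(plus_INR, mult_INR, S_INR) /=; field; lra.
apply: (iffP idP) => [/ltP/lt_INR | lt_AU]; first by nra.
by apply/ltP/INR_lt; nra.
Qed.

Lemma digit_separates (a a' q : R) (b : bool) :
  Rabs (a - a') <= 1 / 4 -> reflect (a < 4 * q + 4 / 3) b ->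
  4 * q + 2 * INR b <= a' <= 4 * q + 2 * INR b + 2 / 3 -> False.
Proof.
move=> close; have := Rle_abs (a - a'); have := Rle_abs (a' - a).
by rewrite Rabs_minus_sym => h1 h2 [] lt_a /=; lra.
Qed.

Lemma alpha_digit_bounds k :
  let a := 4 * INR (alpha_num k) + 2 * INR (digit k (alpha_num k)) in
  a <= alpha * 4 ^ k.+1 <= a + 2 / 3.
Proof.
have hk := pow4_gt0 k.+1; have [lo hi] := alpha_bounds k.+1.
have E : alpha_approx k.+1 * 4 ^ k.+1 = 4 * INR (alpha_num k) + 2 * INR (digit k (alpha_num k)).
  by rewrite /alpha_approx alpha_numS plus_INR !mult_INR /=; field; have := pow4_gt0 k; lra.
split; first by rewrite -E; apply: Rmult_le_compat_r; lra.
rewrite -E; have -> : 2 / 3 = 2 / (3 * 4 ^ k.+1) * 4 ^ k.+1 by field; lra.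
by rewrite -Rmult_plus_distr_r; apply: Rmult_le_compat_r; lra.
Qed.

Lemma alpha_not_E2 : ~ Ecomputable 2 alpha.
Proof.
move=> [f [g [h [Gf [Gg [Gh approx]]]]]].
have [c1 [d1 run1]] := run_Grz2 Gf.
have [c2 [d2 run2]] := run_Grz2 Gg.
have [c3 [d3 run3]] := run_Grz2 Gh.
pose k := npair (npair c1 (npair c2 c3)) (d1 + d2 + d3).
pose X := diag_point k.
have time_ok d : (d <= d1 + d2 + d3)%N -> ((X + 2) ^ d <= diag_time k)%N.
  by move=> le_d; apply: leq_pexp2l; rewrite ?addn2 // (leq_trans le_d) ?leq_npair_r.
have digitE : digit k (alpha_num k) = approx_below (f X) (g X) (h X) (alpha_num k) (4 ^ k.+1).
  rewrite /digit /diag_run /k !nfst_npair !nsnd_npair nfst_npair -/k -/X.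
  by rewrite run1 ?run2 ?run3 //; apply: time_ok; lia.
have hU := pow4_gt0 k.+1.
have close : Rabs (seqA f g h X * 4 ^ k.+1 - alpha * 4 ^ k.+1) <= 1 / 4.
  have -> : 1 / 4 = 1 / (INR X + 1) * 4 ^ k.+1.
    rewrite /X /diag_point minus_INR ?INR_pow4 /=; first by field; have := pow4_gt0 k; lra.
    by apply/leP; rewrite expn_gt0.
  rewrite -Rmult_minus_distr_r Rabs_mult (Rabs_pos_eq (4 ^ k.+1)); last lra.
  by apply: Rmult_le_compat_r; [lra | apply: approx].
apply: digit_separates close _ (alpha_digit_bounds k).
by rewrite digitE -INR_pow4; apply: approx_belowP.
Qed.

Local Close Scope R_scope.

Theorem mainTheorem16 :
  (forall alpha : R, Ecomputable 2 alpha -> Ecomputable 3 alpha) /\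
  (exists alpha : R, Ecomputable 3 alpha /\ ~ Ecomputable 2 alpha).
Proof.
split; last by exists alpha; split; [apply: alpha_E3 | apply: alpha_not_E2].
move=> a [f [g [h [Gf [Gg [Gh approx]]]]]].
by exists f, g, h; do !split; try apply: Grz2_sub_Grz3.
Qed.
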